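(* Let $\mathcal{F}$ be the star-shaped frame described below, let $d_i$ be a domain, and let $p$ be a $d_i$-purge function. Then $\mathcal{F}\in\mathrm{ND}^p$ iff $\mathcal{F}$ $f^p$-limits $\mathsf{IN}$-to-$C_i$ flow, i.e. iff $f^p$ is a blur operator and for every $\mathcal{B}\in\mathrm{lruns}_{C_i}$ the set $J_{C_i}^{\mathsf{IN}}(\mathcal{B})$ satisfies $f^p(J_{C_i}^{\mathsf{IN}}(\mathcal{B}))=J_{C_i}^{\mathsf{IN}}(\mathcal{B})$.
   Context: Frames and executions: a frame has locations, channels (each with a sender and recipient location) and data values; each location $\ell$ has a prefix-closed set $\mathrm{traces}(\ell)$ of finite or infinite sequences of labels (channel, data) over channels incident to $\ell$. Events come from a set $E$ with functions $\mathrm{chan}$, $\mathrm{msg}$; a system of events $(B,\preceq)$ ($B\subseteq E$, $\preceq$ a partial order with finitely many predecessors per event) is an execution ($\in\mathrm{exec}(\mathcal{F})$) iff for each location the events on its incident channels are linearly ordered and, as a label sequence, belong to its trace set. $\mathcal{A}|_C$ keeps the events whose channel is in $C$, with the restricted order; $\mathrm{lruns}_C=\{\mathcal{A}|_C:\mathcal{A}\in\mathrm{exec}(\mathcal{F})\}$; $J_C^{C'}(\mathcal{B})=\{\mathcal{A}|_{C'}:\mathcal{A}\in\mathrm{exec}(\mathcal{F}),\ \mathcal{A}|_C=\mathcal{B}\}$. Setting: a finite set of domains $\{d_1,\dots,d_k\}$ with a reflexive relation $\hookrightarrow$; $\mathcal{F}$ has locations $d_1,\dots,d_k,M$ and channels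 $c_j^{\mathrm{in}}$ (sender $d_j$, recipient $M$) and $c_j^{\mathrm{out}}$ (sender $M$, recipient $d_j$), with given trace sets (e.g. induced by a possibly nondeterministic state machine at $M$). $C_i=\{c_i^{\mathrm{in}},c_i^{\mathrm{out}}\}$, $\mathrm{vis}(d_i)=\{c_j^{\mathrm{in}}:d_j\hookrightarrow d_i\}$, $\mathsf{IN}=\{c_j^{\mathrm{in}}:1\le j\le k\}$, $\mathrm{inp}(\mathcal{A})=\mathcal{A}|_{\mathsf{IN}}$. A $d_i$-purge function is a function $p$ from $\mathrm{exec}(\mathcal{F})$ to some set such that (1) $\mathrm{inp}(\mathcal{A})=\mathrm{inp}(\mathcal{A}')$ implies $p(\mathcal{A})=p(\mathcal{A}')$, and (2) $p(\mathcal{A})=p(\mathcal{A}')$ implies $\mathcal{A}|_{\mathrm{vis}(d_i)}=\mathcal{A}'|_{\mathrm{vis}(d_i)}$. $\mathcal{F}\in\mathrm{ND}^p$ iff for all $\mathcal{A},\mathcal{A}'\in\mathrm{exec}(\mathcal{F})$, $p(\mathcal{A})=p(\mathcal{A}')$ implies $\mathcal{A}'|_{\mathsf{IN}}\in J_{C_i}^{\mathsf{IN}}(\mathcal{A}|_{C_i})$. Define the relation $\mathcal{R}$ on $\mathrm{lruns}_{\mathsf{IN}}$ by $\mathcal{R}(\mathcal{B}_1,\mathcal{B}_2)$ iff there exist $\mathcal{A}_1,\mathcal{A}_2\in\mathrm{exec}(\mathcal{F})$ with $\mathcal{B}_j=\mathcal{A}_j|_{\mathsf{IN}}$ ($j=1,2$)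 and $p(\mathcal{A}_1)=p(\mathcal{A}_2)$ (an equivalence relation on $\mathrm{lruns}_{\mathsf{IN}}$), and let $f^p(S)=\{\mathcal{B}_2\in\mathrm{lruns}_{\mathsf{IN}}:\exists\mathcal{B}_1\in S,\ \mathcal{R}(\mathcal{B}_1,\mathcal{B}_2)\}$ for $S\subseteq\mathrm{lruns}_{\mathsf{IN}}$ (closure under $\mathcal{R}$-classes). A blur operator is a function $f$ on sets with $S\subseteq f(S)$, $f(f(S))=f(S)$ and $f(\bigcup_i S_i)=\bigcup_i f(S_i)$. *)

From Stdlib Require Import List Arith.

Set Implicit Arguments.

Definition pset (T : Type) := T -> Prop.
Definition subset {T} (S S' : pset T) := forall x, S x -> S' x.

Definition finite_type (Dom : Type) := exists l : list Dom, forall d, In d l.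

Section Star.
Variable Dom : Type.
Variable Data : Type.

Inductive loc := LDom (j : Dom) | LM.
Inductive chan := Cin (j : Dom) | Cout (j : Dom).

Definition sender (c : chan) : loc :=
  match c with Cin j => LDom j | Cout _ => LM end.
Definition recipient (c : chan) : loc :=
  match c with Cin _ => LM | Cout j => LDom j end.

Definition label := (chan * Data)%type.

(* finite or infinite sequences: nat -> option label, None from some point on
   (finite) or never None (infinite) *)
Definition lseq := nat -> option label.
Definition wf_lseq (s : lseq) := forall n, s n = None -> s (S n) = None.
Definition prefix (n : nat) (s : lseq) : lseq :=
  fun m => if m <? n then s m else None.

Definition wf_traces (tr : loc -> pset lseq) :=
  forall l s, tr l s ->
    wf_lseq s /\ (forall n, tr l (prefix n s)) /\
    (forall n c d, s n = Some (c, d) -> sender c = l \/ recipient c = l).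

Variable E : Type.
Variable echan : E -> chan.
Variable emsg : E -> Data.

Record sys := Sys { ev : pset E; ord : E -> E -> Prop }.

Definition is_system (A : sys) :=
  (forall x y, ord A x y -> ev A x /\ ev A y) /\
  (forall x, ev A x -> ord A x x) /\
  (forall x y, ord A x y -> ord A y x -> x = y) /\
  (forall x y z, ord A x y -> ord A y z -> ord A x z) /\
  (forall y, ev A y -> exists l : list E, forall x, ord A x y -> In x l).

Definition incident (l : loc) (c : chan) := sender c = l \/ recipient c = l.

Variable tr : loc -> pset lseq.

Definition is_exec (A : sys) :=
  is_system A /\
  forall l : loc,
    let Ev := fun e => ev A e /\ incident l (echan e) in
    (forall x y, Ev x -> Ev y -> ord A x y \/ ord A y x) /\
    exists s, tr l s /\
      exists g : nat -> option E,
        (forall n, match g n with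
                   | Some e => Ev e /\ s n = Some (echan e, emsg e)
                   | None => s n = None
                   end) /\
        (forall n m e e', g n = Some e -> g m = Some e' ->
                          (n <= m <-> ord A e e')) /\
        (forall e, Ev e -> exists n, g n = Some e).

Definition restrict (C : pset chan) (A : sys) : sys :=
  Sys (fun e => ev A e /\ C (echan e))
      (fun x y => ord A x y /\ C (echan x) /\ C (echan y)).

Definition lruns (C : pset chan) : pset sys :=
  fun B => exists A, is_exec A /\ restrict C A = B.

Definition Jflow (C C' : pset chan) (B : sys) : pset sys :=
  fun B' => exists A, is_exec A /\ restrict C A = B /\ restrict C' A = B'.

Variable hook : Dom -> Dom -> Prop.   (* d_j ↪ d_i  is  hook j i *)

Definition Ci (i : Dom) : pset chan := fun c => c = Cin i \/ c = Cout i.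
Definition vis (i : Dom) : pset chan := fun c => exists j, c = Cin j /\ hook j i.
Definition IN : pset chan := fun c => exists j, c = Cin j.
Definition inp (A : sys) := restrict IN A.

Variable X : Type.

Definition is_purge (i : Dom) (p : sys -> X) :=
  (forall A A', is_exec A -> is_exec A' -> inp A = inp A' -> p A = p A') /\
  (forall A A', is_exec A -> is_exec A' -> p A = p A' ->
     restrict (vis i) A = restrict (vis i) A').

Definition ND (i : Dom) (p : sys -> X) :=
  forall A A', is_exec A -> is_exec A' -> p A = p A' ->
    Jflow (Ci i) IN (restrict (Ci i) A) (restrict IN A').

Definition Rrel (p : sys -> X) (B1 B2 : sys) :=
  exists A1 A2, is_exec A1 /\ is_exec A2 /\
    restrict IN A1 = B1 /\ restrict IN A2 = B2 /\ p A1 = p A2.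

Definition fp (p : sys -> X) (S : pset sys) : pset sys :=
  fun B2 => lruns IN B2 /\ exists B1, S B1 /\ Rrel p B1 B2.

End Star.

Definition bigcup {T I : Type} (F : I -> pset T) : pset T :=
  fun x => exists i, F i x.

Definition blur_on {T : Type} (U : pset T) (f : pset T -> pset T) :=
  (forall S, subset S U -> subset S (f S)) /\
  (forall S, subset S U -> f (f S) = f S) /\
  (forall (I : Type) (F : I -> pset T), (forall i, subset (F i) U) ->
     f (bigcup F) = bigcup (fun i => f (F i))).

Definition limits_flow {Dom Data E X : Type} (echan : E -> chan Dom)
  (emsg : E -> Data) (tr : loc Dom -> pset (lseq Dom Data))
  (i : Dom) (p : sys E -> X) :=
  blur_on (lruns echan emsg tr (IN (Dom:=Dom))) (fp echan emsg tr p) /\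
  forall B, lruns echan emsg tr (Ci i) B ->
    fp echan emsg tr p (Jflow echan emsg tr (Ci i) (IN (Dom:=Dom)) B)
    = Jflow echan emsg tr (Ci i) (IN (Dom:=Dom)) B.

From Stdlib Require Import List Arith.
From Stdlib Require Import FunctionalExtensionality PropExtensionality.

Set Implicit Arguments.
Unset Strict Implicit.

(* Because p depends only on the inputs, the relation R identifies two input
   runs exactly when every execution realizing one is p-equivalent to every
   execution realizing the other; so R is an equivalence on lruns_IN and f^p,
   which closes a set under R-classes, is a blur operator.  ND^p says that
   p-equivalent executions A, A' admit an execution with the C_i-view of A and
   the inputs of A', i.e. that every J_{C_i}^IN(B) is closed under R-classes,
   which is the fixed-point condition f^p(J(B)) = J(B). *)

Lemma pset_ext {T : Type} (S S' : pset T) : (forall x, S x <-> S' x) -> S = S'.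
Proof.
  intro H; apply functional_extensionality; intro x.
  apply propositional_extensionality; auto.
Qed.

Section PurgeClosure.

Variables Dom Data E X : Type.
Variable echan : E -> chan Dom.
Variable emsg : E -> Data.
Variable tr : loc Dom -> pset (lseq Dom Data).
Variable p : sys E -> X.

Local Notation exec := (is_exec echan emsg tr).
Local Notation IN := (IN (Dom:=Dom)).
Local Notation lrunsIN := (lruns echan emsg tr IN).
Local Notation R := (Rrel echan emsg tr p).
Local Notation f := (fp echan emsg tr p).
Local Notation J C := (Jflow echan emsg tr C IN).

Hypothesis p_inp : forall A A', exec A -> exec A' -> inp echan A = inp echan A' -> p A = p A'.

Lemma Rrel_refl B : lrunsIN B -> R B B.
Proof.
  intros [A [eA rA]].
  exists A, A; auto.
Qed.

Lemma Rrel_trans B1 B2 B3 : R B1 B2 -> R B2 B3 -> R B1 B3.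
Proof.
  intros [A1 [A2 [e1 [e2 [r1 [r2 q]]]]]] [A2' [A3 [e2' [e3 [r2' [r3 q']]]]]].
  exists A1, A3; do 4 (split; auto).
  rewrite q, <- q'; apply p_inp; auto.
  unfold inp; congruence.
Qed.

Lemma fp_extensive S : subset S lrunsIN -> subset S (f S).
Proof.
  intros HS B HB; split; auto.
  exists B; split; auto; apply Rrel_refl; auto.
Qed.

Lemma fp_idem S : subset S lrunsIN -> f (f S) = f S.
Proof.
  intro HS; apply pset_ext; intro B; split.
  - intros [HB [B1 [[_ [B0 [HB0 R01]]] R1]]].
    split; auto; exists B0; split; auto.
    apply Rrel_trans with B1; auto.
  - apply fp_extensive; intros x Hx; apply Hx.
Qed.

Lemma fp_bigcup (I : Type) (F : I -> pset (sys E)) :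
  f (bigcup F) = bigcup (fun j => f (F j)).
Proof.
  apply pset_ext; intro B; split.
  - intros [HB [B1 [[j Hj] R1]]]; exists j; split; auto; exists B1; auto.
  - intros [j [HB [B1 [Hj R1]]]]; split; auto; exists B1; split; auto; exists j; auto.
Qed.

Lemma blur_on_fp : blur_on lrunsIN f.
Proof.
  split; [exact fp_extensive | split; [exact fp_idem |]].
  intros; apply fp_bigcup.
Qed.

Lemma Jflow_sub_lruns C B : subset (J C B) lrunsIN.
Proof. intros B' [A [eA [_ rA]]]; exists A; auto. Qed.

Variable C : pset (chan Dom).

Definition ND_on :=
  forall A A', exec A -> exec A' -> p A = p A' ->
    J C (restrict echan C A) (restrict echan IN A').

Lemma fp_Jflow_of_ND B : ND_on -> f (J C B) = J C B.
Proof.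
  intro HND; apply pset_ext; intro B2; split.
  - intros [_ [B1 [[A [eA [rA rA']]] [A1 [A2 [e1 [e2 [r1 [r2 q]]]]]]]]].
    assert (pA : p A = p A2).
    { rewrite <- q; apply p_inp; auto; unfold inp; congruence. }
    destruct (HND A A2 eA e2 pA) as [A'' [e'' [c'' i'']]].
    exists A''; split; [| split]; congruence.
  - apply fp_extensive, Jflow_sub_lruns.
Qed.

Lemma ND_of_fp_Jflow :
  (forall B, lruns echan emsg tr C B -> f (J C B) = J C B) -> ND_on.
Proof.
  intros Hfix A A' eA eA' q.
  rewrite <- (Hfix (restrict echan C A)) by (exists A; auto).
  split; [exists A'; auto |].
  exists (restrict echan IN A); split; [exists A; auto |].
  exists A, A'; auto.
Qed.

End PurgeClosure.

Theorem lemma10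
  (Dom Data E X : Type)
  (Hfin : finite_type Dom)
  (hook : Dom -> Dom -> Prop) (Hrefl : forall d, hook d d)
  (tr : loc Dom -> pset (lseq Dom Data)) (Htr : wf_traces tr)
  (echan : E -> chan Dom) (emsg : E -> Data)
  (i : Dom) (p : sys E -> X)
  (Hp : is_purge echan emsg tr hook i p) :
  ND echan emsg tr i p <-> limits_flow echan emsg tr i p.
Proof.
  destruct Hp as [p_inp _].
  split.
  - intro HND; split; [exact (blur_on_fp p_inp) |].
    intros B _; exact (fp_Jflow_of_ND p_inp (C := Ci i) B HND).
  - intros [_ Hfix]; exact (ND_of_fp_Jflow Hfix).
Qed.
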